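(* Let $K$ be an algebraically closed field, $R=K[x_1,\dots,x_6]$ and $I=(x_1x_3,\ x_1x_4,\ x_2x_4,\ x_3x_5,\ x_3x_6,\ x_4x_6,\ x_1x_2x_5,\ x_1x_2x_6,\ x_1x_5x_6,\ x_2x_5x_6)$. Then $$I=\sqrt{(x_1x_4,\ x_3x_6,\ x_1x_3+x_2x_4+x_1x_2x_5,\ x_3x_5+x_4x_6+x_1x_2x_6+x_1x_5x_6+x_2x_5x_6)}.$$ *)

From mathcomp Require Import all_boot all_algebra.
From mathcomp Require Import mpoly.
Set Implicit Arguments. Unset Strict Implicit. Unset Printing Implicit Defensive.
Import GRing.Theory.
Local Open Scope ring_scope.

Definition in_ideal (R : comNzRingType) (n : nat) (gs : seq {mpoly R[n]}) (p : {mpoly R[n]}) : Prop :=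
  exists c : 'I_(size gs) -> {mpoly R[n]}, p = \sum_(i < size gs) c i * gs`_i.

Definition in_radical (R : comNzRingType) (n : nat) (gs : seq {mpoly R[n]}) (p : {mpoly R[n]}) : Prop :=
  exists k : nat, in_ideal gs (p ^+ k).

(* Variables x_1..x_6 of K[x_1,...,x_6], with x_(i+1) = 'X_i for i : 'I_6. *)
Definition xv (K : comNzRingType) (i : 'I_6) : {mpoly K[6]} := 'X_i.

Definition gensI (K : comNzRingType) : seq {mpoly K[6]} :=
  let x1 := xv K 0 in let x2 := xv K 1 in let x3 := xv K 2 in
  let x4 := xv K 3 in let x5 := xv K 4 in let x6 := xv K 5 in
  [:: x1 * x3; x1 * x4; x2 * x4; x3 * x5; x3 * x6; x4 * x6;
      x1 * x2 * x5; x1 * x2 * x6; x1 * x5 * x6; x2 * x5 * x6].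

Definition gensJ (K : comNzRingType) : seq {mpoly K[6]} :=
  let x1 := xv K 0 in let x2 := xv K 1 in let x3 := xv K 2 in
  let x4 := xv K 3 in let x5 := xv K 4 in let x6 := xv K 5 in
  [:: x1 * x4; x3 * x6; x1 * x3 + x2 * x4 + x1 * x2 * x5;
      x3 * x5 + x4 * x6 + x1 * x2 * x6 + x1 * x5 * x6 + x2 * x5 * x6].

(* Let J be the ideal generated by the four polynomials.  Then J is
   contained in I, each generator of I has a power in J (with explicit
   cofactors), and I is radical, being generated by squarefree monomials:
   if p ^+ k lies in I, remove from p its terms lying in I.  The remainder q
   has no monomial in I, yet q ^+ k lies in I, hence so does its leading
   monomial, k times that of q (its coefficient is a power of the nonzero
   leading coefficient of q); by squarefreeness the leading monomial of q
   lies in I, so q = 0. *)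

From mathcomp Require Import all_boot all_algebra.
From mathcomp Require Import mpoly.
From mathcomp Require Import ring.
Set Implicit Arguments. Unset Strict Implicit. Unset Printing Implicit Defensive.
Import GRing.Theory.
Local Open Scope ring_scope.

Section Ideal.
Variables (R : comNzRingType) (n : nat) (gs : seq {mpoly R[n]}).

Lemma in_ideal0 : in_ideal gs 0.
Proof. by exists (fun _ => 0); rewrite big1 // => i _; rewrite mul0r. Qed.

Lemma in_idealD p q : in_ideal gs p -> in_ideal gs q -> in_ideal gs (p + q).
Proof.
move=> [c ->] [d ->]; exists (fun i => c i + d i); rewrite -big_split.
by apply: eq_bigr => i _; rewrite mulrDl.
Qed.

Lemma in_idealM a p : in_ideal gs p -> in_ideal gs (a * p).
Proof.
move=> [c ->]; exists (fun i => a * c i); rewrite mulr_sumr.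
by apply: eq_bigr => i _; rewrite mulrA.
Qed.

Lemma in_idealMr a p : in_ideal gs p -> in_ideal gs (p * a).
Proof. by rewrite mulrC; apply: in_idealM. Qed.

Lemma in_ideal_sum (I : Type) (r : seq I) (P : pred I) F :
  (forall i, P i -> in_ideal gs (F i)) -> in_ideal gs (\sum_(i <- r | P i) F i).
Proof. by move=> h; apply: big_ind => //; [apply: in_ideal0 | apply: in_idealD]. Qed.

Lemma in_ideal_gen i : (i < size gs)%N -> in_ideal gs gs`_i.
Proof.
move=> lt_i; exists (fun j => ((j : nat) == i)%:R).
rewrite (bigD1 (Ordinal lt_i)) //= eqxx mul1r big1 ?addr0 // => j neq_ji.
suff /negbTE-> : (j : nat) != i by rewrite mul0r.
by apply: contra neq_ji => /eqP eq_ji; apply/eqP/val_inj.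
Qed.

Lemma in_ideal_trans (hs : seq {mpoly R[n]}) p :
  (forall i : 'I_(size hs), in_ideal gs hs`_i) -> in_ideal hs p -> in_ideal gs p.
Proof. by move=> hs_gs [c ->]; apply: in_ideal_sum => i _; apply/in_idealM/hs_gs. Qed.

Lemma in_radicalD p q : in_radical gs p -> in_radical gs q -> in_radical gs (p + q).
Proof.
move=> [m pm] [k qk]; exists (m + k)%N; rewrite exprDn.
apply: in_ideal_sum => i _; rewrite -mulr_natr; apply: in_idealMr.
have [le_ki | lt_ik] := leqP k i.
  by rewrite -(subnKC le_ki) exprD mulrCA mulrC; apply: in_idealM.
have le_m : (m <= m + k - i)%N by rewrite -addnBA ?leq_addr // ltnW.
by rewrite -(subnKC le_m) exprD -mulrA; apply: in_idealMr.
Qed.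

Lemma in_radicalM a p : in_radical gs p -> in_radical gs (a * p).
Proof. by move=> [k pk]; exists k; rewrite exprMn; apply: in_idealM. Qed.

Lemma in_radical_sum (I : Type) (r : seq I) (P : pred I) F :
  (forall i, P i -> in_radical gs (F i)) -> in_radical gs (\sum_(i <- r | P i) F i).
Proof.
move=> h; apply: big_ind => //; last exact: in_radicalD.
by exists 1%N; rewrite expr1; apply: in_ideal0.
Qed.

End Ideal.

Section SquarefreeMonomial.
Variable n : nat.
Implicit Types (A : {set 'I_n}) (m : 'X_{1..n}).

Definition sqfree_mnm A : 'X_{1..n} := [multinom (i \in A : nat) | i < n].

Definition mnm_supp m : {set 'I_n} := [set i | m i != 0%N].

Lemma sqfree_mnm_le A m : (sqfree_mnm A <= m)%MM = (A \subset mnm_supp m).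
Proof.
apply/idP/subsetP => [/mnm_lepP le_Am i iA | sub_Am].
  by have := le_Am i; rewrite mnmE iA inE lt0n.
apply/mnm_lepP => i; rewrite mnmE; case iA: (i \in A) => //.
by move/sub_Am: iA; rewrite inE lt0n.
Qed.

Lemma mnm_supp_mulmn m k : mnm_supp (m *+ k) \subset mnm_supp m.
Proof. by apply/subsetP => i; rewrite !inE mulmnE muln_eq0 negb_or => /andP[]. Qed.

Lemma sqfree_mnm_set_seq (s : seq 'I_n) :
  uniq s -> sqfree_mnm [set:: s] = (\sum_(i <- s) U_(i))%MM.
Proof.
move=> uniq_s; apply/mnmP => j; rewrite mnmE mnm_sumE inE -count_uniq_mem //.
by rewrite -sum1_count big_mkcond; apply: eq_bigr => i _; rewrite mnm1E.
Qed.

Variable F : seq {set 'I_n}.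

Definition sqfree_dvd m := has (fun A : {set 'I_n} => A \subset mnm_supp m) F.

Lemma sqfree_dvd_mulmn m k : sqfree_dvd (m *+ k) -> sqfree_dvd m.
Proof. by apply: sub_has => A /subset_trans; apply; apply: mnm_supp_mulmn. Qed.

End SquarefreeMonomial.

Section SquarefreeIdeal.
Variables (R : comNzRingType) (n : nat).
Implicit Types (p : {mpoly R[n]}) (m : 'X_{1..n}).

Definition sqfree_gens (F : seq {set 'I_n}) : seq {mpoly R[n]} :=
  [seq 'X_[sqfree_mnm A] | A <- F].

Lemma sqfree_gens_set_seq (ss : seq (seq 'I_n)) : all uniq ss ->
  sqfree_gens [seq [set:: s] | s <- ss] = [seq \prod_(i <- s) 'X_i | s <- ss].
Proof.
move=> /allP uniq_ss; rewrite /sqfree_gens -map_comp.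
apply/eq_in_map => s /uniq_ss uniq_s /=; rewrite sqfree_mnm_set_seq //.
by rewrite -(big_map (@mnm1 n) xpredT (fun m => 'X_[m])) mpolyX_prod big_map.
Qed.

Lemma mcoeffMX_eq0 p g m : ~~ (g <= m)%MM -> (p * 'X_[g])@_m = 0.
Proof.
move=> not_le_gm; rewrite {1}(mpolyE p) mulr_suml raddf_sum big1 // => k _.
rewrite -scalerAl -mpolyXD /= mcoeffZ mcoeffX.
suff /negbTE-> : (k + g)%MM != m by rewrite mulr0.
by apply: contra not_le_gm => /eqP <-; apply: lem_addl.
Qed.

Variable F : seq {set 'I_n}.

Lemma mcoeff_sqfree_ideal p m :
  in_ideal (sqfree_gens F) p -> ~~ sqfree_dvd F m -> p@_m = 0.
Proof.
move=> [c ->] ndvd_m; rewrite raddf_sum big1 // => i _.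
have lt_i : (i < size F)%N by case: i => i; rewrite size_map.
rewrite /= (nth_map set0) // mcoeffMX_eq0 // sqfree_mnm_le.
by move/hasPn: ndvd_m; apply; apply: mem_nth.
Qed.

Lemma mpolyX_in_sqfree_ideal m : sqfree_dvd F m -> in_ideal (sqfree_gens F) 'X_[m].
Proof.
case/hasP=> A /(nthP set0) [i lt_i <-]; rewrite -sqfree_mnm_le => le_Am.
rewrite -(submK le_Am) mpolyXD -(nth_map _ 0 (fun A => 'X_[sqfree_mnm A])) //.
by apply/in_idealM/in_ideal_gen; rewrite size_map.
Qed.

Definition sqfree_nf p := \sum_(m <- msupp p | ~~ sqfree_dvd F m) p@_m *: 'X_[m].

Lemma sqfree_nf_eq p : in_ideal (sqfree_gens F) (p - sqfree_nf p).
Proof.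
rewrite {1}(mpolyE p) (bigID (sqfree_dvd F)) /= addrK.
apply: in_ideal_sum => m dvd_m; rewrite -mul_mpolyC.
exact/in_idealM/mpolyX_in_sqfree_ideal.
Qed.

Lemma mcoeff_sqfree_nf p m : sqfree_dvd F m -> (sqfree_nf p)@_m = 0.
Proof.
move=> dvd_m; rewrite raddf_sum big1_seq // => m' /andP[ndvd_m' _].
rewrite /= mcoeffZ mcoeffX; suff /negbTE-> : m' != m by rewrite mulr0.
by apply: contraNneq ndvd_m' => ->.
Qed.

End SquarefreeIdeal.

Lemma sqfree_ideal_radical (R : idomainType) n (F : seq {set 'I_n})
    (p : {mpoly R[n]}) k :
  in_ideal (sqfree_gens R F) (p ^+ k) -> in_ideal (sqfree_gens R F) p.
Proof.
move=> pkI; set I := sqfree_gens R F; set q := sqfree_nf F p.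
have qkI : in_ideal I (q ^+ k).
  have -> : q ^+ k = p ^+ k + - (p ^+ k - q ^+ k) by rewrite opprB addrC subrK.
  rewrite subrXX -mulrN; apply: in_idealD => //.
  exact/in_idealMr/sqfree_nf_eq.
suff q0 : q = 0 by rewrite -[p]subr0 -q0; apply: sqfree_nf_eq.
apply/eqP; apply: contraT => qn0.
have ndvd_lead : ~~ sqfree_dvd F (mlead q).
  by apply: contra qn0 => /(mcoeff_sqfree_nf p) /eqP; rewrite mleadc_eq0.
have := mcoeff_sqfree_ideal qkI (contra (@sqfree_dvd_mulmn _ F _ k) ndvd_lead).
by rewrite /= mleadcX => /eqP; rewrite expf_eq0 mleadc_eq0 (negbTE qn0) andbF.
Qed.

Section Generators.
Variable K : comNzRingType.
Local Notation x1 := (xv K 0).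
Local Notation x2 := (xv K 1).
Local Notation x3 := (xv K 2).
Local Notation x4 := (xv K 3).
Local Notation x5 := (xv K 4).
Local Notation x6 := (xv K 5).

(* Variable x_(i+1) is indexed by i. *)
Definition suppsI : seq {set 'I_6} :=
  [seq [set:: s] | s <- [:: [:: 0; 2]; [:: 0; 3]; [:: 1; 3]; [:: 2; 4]; [:: 2; 5];
                            [:: 3; 5]; [:: 0; 1; 4]; [:: 0; 1; 5]; [:: 0; 4; 5]; [:: 1; 4; 5]]].

Lemma gensI_sqfree : gensI K = sqfree_gens K suppsI.
Proof. by rewrite sqfree_gens_set_seq //= !big_cons !big_nil !mulr1 !mulrA. Qed.

Lemma in_radical_gensJ k a b c d p :
  p ^+ k = a * (x1 * x4) + b * (x3 * x6) + c * (x1 * x3 + x2 * x4 + x1 * x2 * x5)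
           + d * (x3 * x5 + x4 * x6 + x1 * x2 * x6 + x1 * x5 * x6 + x2 * x5 * x6) ->
  in_radical (gensJ K) p.
Proof.
move=> pk; exists k; rewrite pk; exists (nth 0 [:: a; b; c; d] \o val).
by rewrite !big_ord_recr big_ord0 /= add0r.
Qed.

Lemma gensI_in_radical (i : 'I_(size (gensI K))) : in_radical (gensJ K) (gensI K)`_i.
Proof.
case: i => [[|[|[|[|[|[|[|[|[|[|//]]]]]]]]]] _] /=.
- apply: (@in_radical_gensJ 3 (- x1 * x2 * x3 ^+ 2 + x1 ^+ 2 * x2 * x3 * x6)
    (x1 ^+ 3 * x2 ^+ 2 * x5 + x1 ^+ 4 * x2 * x5 + x1 ^+ 4 * x2 ^+ 2)
    (x1 ^+ 2 * x3 ^+ 2) (- x1 ^+ 3 * x2 * x3)); ring.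
- apply: (@in_radical_gensJ 1 1 0 0 0); ring.
- apply: (@in_radical_gensJ 2 (- x2 * x3 - x2 ^+ 2 * x5) 0 (x2 * x4) 0); ring.
- apply: (@in_radical_gensJ 2 0 (- x4 * x5 - x2 * x5 ^+ 2 - x1 * x5 ^+ 2 - x1 * x2 * x5)
    0 (x3 * x5)); ring.
- apply: (@in_radical_gensJ 1 0 1 0 0); ring.
- apply: (@in_radical_gensJ 3
    (- x4 * x5 * x6 ^+ 3 + x3 * x5 * x6 ^+ 3 + x2 * x5 ^+ 2 * x6 ^+ 3 - x2 * x4 * x6 ^+ 3)
    (- x4 ^+ 2 * x5 * x6) (- x4 * x5 * x6 ^+ 3) (x4 ^+ 2 * x6 ^+ 2)); ring.
- apply: (@in_radical_gensJ 3
    (x1 * x2 ^+ 2 * x3 * x5 - x1 * x2 ^+ 3 * x5 ^+ 2 - x1 ^+ 2 * x2 * x3 * x6)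
    (- x1 ^+ 3 * x2 ^+ 2 * x5 - x1 ^+ 4 * x2 * x5 - x1 ^+ 4 * x2 ^+ 2)
    (- x1 ^+ 2 * x2 * x3 * x5 + x1 ^+ 2 * x2 ^+ 2 * x5 ^+ 2) (x1 ^+ 3 * x2 * x3)); ring.
- apply: (@in_radical_gensJ 3 (x2 ^+ 3 * x6 ^+ 3)
    (x1 ^+ 2 * x2 ^+ 2 * x6 ^+ 2 - x1 ^+ 2 * x2 ^+ 2 * x5 * x6 + x1 ^+ 3 * x2 * x6 ^+ 2)
    (- x1 * x2 ^+ 2 * x6 ^+ 3 - x1 ^+ 2 * x2 * x6 ^+ 3) (x1 ^+ 2 * x2 ^+ 2 * x6 ^+ 2)); ring.
- apply: (@in_radical_gensJ 3
    (x2 * x5 ^+ 2 * x6 ^+ 3 - x1 * x5 ^+ 2 * x6 ^+ 3 + x1 * x2 * x5 * x6 ^+ 3)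
    (x1 ^+ 2 * x5 ^+ 2 * x6 ^+ 2 - x1 ^+ 2 * x5 ^+ 3 * x6 + x1 ^+ 3 * x5 * x6 ^+ 2)
    (- x1 * x5 ^+ 2 * x6 ^+ 3 - x1 ^+ 2 * x5 * x6 ^+ 3) (x1 ^+ 2 * x5 ^+ 2 * x6 ^+ 2)); ring.
- apply: (@in_radical_gensJ 3 (x2 * x3 * x6 ^+ 3 - x2 ^+ 3 * x6 ^+ 3)
    (- x2 ^+ 2 * x5 ^+ 3 * x6 - x2 ^+ 2 * x4 * x5 * x6 + x1 * x2 * x5 ^+ 2 * x6 ^+ 2
     + x1 * x2 ^+ 2 * x5 * x6 ^+ 2)
    (- x2 * x5 ^+ 2 * x6 ^+ 3 - x2 * x4 * x6 ^+ 3 - x2 ^+ 2 * x5 * x6 ^+ 3)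
    (x2 ^+ 2 * x5 ^+ 2 * x6 ^+ 2 + x2 ^+ 2 * x4 * x6 ^+ 2)); ring.
Qed.

Lemma gensJ_in_ideal (i : 'I_(size (gensJ K))) : in_ideal (gensI K) (gensJ K)`_i.
Proof.
have gI j : (j < 10)%N -> in_ideal (gensI K) (gensI K)`_j
  := @in_ideal_gen _ _ (gensI K) j.
case: i => [[|[|[|[|//]]]] _] /=.
- exact: (gI 1%N).
- exact: (gI 4%N).
- by do 2?apply: in_idealD; [apply: (gI 0%N) | apply: (gI 2%N) | apply: (gI 6%N)].
- by do 4?apply: in_idealD;
    [apply: (gI 3%N) | apply: (gI 5%N) | apply: (gI 7%N) | apply: (gI 8%N) | apply: (gI 9%N)].
Qed.

End Generators.

Theorem mainTheorem12 (K : closedFieldType) (p : {mpoly K[6]}) :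
  in_ideal (gensI K) p <-> in_radical (gensJ K) p.
Proof.
split=> [[c ->] | [k pkJ]].
  by apply: in_radical_sum => i _; apply/in_radicalM/gensI_in_radical.
rewrite gensI_sqfree; apply: (sqfree_ideal_radical (k := k)).
by rewrite -gensI_sqfree; apply: in_ideal_trans pkJ; apply: gensJ_in_ideal.
Qed.
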